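(* For every positive integer $d$, the $d$-Young reducibility digraph $\mathfrak G_d$ contains no directed cycle. Consequently, for every $n$, the subdigraph $\mathfrak G_{d,n}$ contains no directed cycle.
   Context: A Ferrers diagram is a finite $\mathcal D\subseteq\{1,2,\dots\}^2$ such that $(x,y)\in\mathcal D$ implies $(i,j)\in\mathcal D$ for all $1\le i\le x$, $1\le j\le y$ (first coordinate = row); it has order $n$ if $\mathcal D\subseteq\{1,\dots,n\}^2$. With column heights $c_i=|\mathcal D\cap(\mathbb N\times\{i\})|$, $\nu_j(\mathcal D,d)=\sum_{i\ge j+1}\max\{0,c_i-d+j\}$ for $0\le j\le d-1$ and $\nu_{\min}(\mathcal D,d)=\min_j\nu_j(\mathcal D,d)$. A point $P\in\mathcal D$ is removable if $\mathcal D\setminus\{P\}$ is a Ferrers diagram. For $\mathcal D'=\mathcal D\setminus\{P\}$ with $P$ removable, write $\mathcal D'\xrightarrow{d}\mathcal D$ if $\nu_{\min}(\mathcal D',d)=\nu_{\min}(\mathcal D,d)$ and $\mathcal D\xrightarrow{d}\mathcal D'$ otherwise. The $d$-Young digraph $\mathfrak G_d$ has vertex set the set of all Ferrers diagrams (including $\emptyset$) and a directed edge $(\mathcal D,\mathcal D')$ iff $\mathcal D\xrightarrow{d}\mathcal D'$. $\mathfrak G_{d,n}$ is the subdigraph induced on the Ferrers diagrams of order $n$. *)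

From mathcomp Require Import all_boot all_order.
From mathcomp Require Import finmap.

Set Implicit Arguments.
Unset Strict Implicit.
Unset Printing Implicit Defensive.

Open Scope fset_scope.

(* A candidate diagram: a finite set of points (row, column) of N x N. *)
Definition diagram := {fset (nat * nat)}.

Definition ferrers (D : diagram) : bool :=
  all (fun p : nat * nat =>
         [&& 0 < p.1, 0 < p.2 &
          all (fun i => all (fun j => (i, j) \in D) (iota 1 p.2)) (iota 1 p.1)])
      D.

Definition of_order (n : nat) (D : diagram) : bool :=
  ferrers D && all (fun p : nat * nat => (p.1 <= n) && (p.2 <= n)) D.

Definition colh (D : diagram) (i : nat) : nat :=
  #|` [fset p in D | p.2 == i]|.

(* largest column index occurring in D (0 if D is empty) *)
Definition colbound (D : diagram) : nat := \max_(p <- D) p.2.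

(* nu_j(D,d) = sum_{i >= j+1} max(0, c_i - d + j).
   In nat, max(0, c_i - d + j) = c_i + j - d (truncated subtraction).
   Columns i > colbound D have c_i = 0 and contribute max(0, j - d) = 0
   (since j <= d-1), so the infinite sum is the finite sum below. *)
Definition nu (j : nat) (D : diagram) (d : nat) : nat :=
  \sum_(j.+1 <= i < (colbound D).+1) (colh D i + j - d).

(* nu_min(D,d) = min_{0 <= j <= d-1} nu_j(D,d)  (meaningful for d >= 1) *)
Definition numin (D : diagram) (d : nat) : nat :=
  \big[minn/nu 0 D d]_(0 <= j < d) nu j D d.

Definition removable (D : diagram) (P : nat * nat) : bool :=
  (P \in D) && ferrers (D `\ P).

(* Directed edge (D, E) of the d-Young digraph G_d. For D' = D \ {P} with P
   removable: D' -> D if nu_min(D') = nu_min(D), and D -> D' otherwise. *)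
Definition yedge (d : nat) (D E : diagram) : bool :=
  [&& ferrers D, ferrers E &
   has (fun P => removable D P && (E == D `\ P) && (numin E d != numin D d)) D
   || has (fun P => removable E P && (D == E `\ P) && (numin D d == numin E d)) E].

Definition directed_cycle (e : rel diagram) (c : seq diagram) : Prop :=
  [/\ c != [::], uniq c & cycle e c].

From mathcomp Require Import all_boot all_order.
From mathcomp Require Import finmap.
From mathcomp Require Import zify.

(* Every [nu j] is monotone under inclusion of diagrams, hence so is
   [numin].  An edge D -> D' of the d-Young digraph either removes a point
   and changes [numin], so strictly lowers it, or adds a point and keeps
   [numin].  Hence edges strictly increase the lexicographic potential
   (- numin, size), and no directed cycle can exist. *)

Lemma colh_mono (E D : diagram) i : E `<=` D -> colh E i <= colh D i.
Proof.
move=> sED; apply: fsubset_leq_card; apply/fsubsetP => p.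
by rewrite !inE /= => /andP[/(fsubsetP sED) -> ->].
Qed.

Lemma colbound_mono (E D : diagram) : E `<=` D -> colbound E <= colbound D.
Proof.
move=> sED; apply/bigmax_leqP_seq => p /(fsubsetP sED) pD _.
exact: (leq_bigmax_seq (F := fun p : nat * nat => p.2)).
Qed.

Lemma nu_mono (E D : diagram) j d : E `<=` D -> nu j E d <= nu j D d.
Proof.
move=> sED; rewrite /nu (big_nat_widen _ _ (colbound D).+1 xpredT) /=;
  last by rewrite ltnS colbound_mono.
rewrite [X in _ <= X]big_mkcond [X in X <= _]big_mkcond /=.
apply: leq_sum => i _; case: ifP => // _.
by rewrite leq_sub2r // leq_add2r colh_mono.
Qed.

Lemma numin_mono (E D : diagram) d : E `<=` D -> numin E d <= numin D d.
Proof.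
move=> sED; apply: (big_ind2 (fun a b => a <= b)) => [||j _]; try exact: nu_mono.
by move=> a b a' b' le_ab le_a'b'; rewrite leq_min !geq_min le_ab le_a'b' orbT.
Qed.

Definition young_rank_lt (d : nat) (D E : diagram) : bool :=
  (numin E d < numin D d) || ((numin E d == numin D d) && (#|` D| < #|` E|)).

Lemma young_rank_lt_trans d : transitive (young_rank_lt d).
Proof. by move=> E D F; rewrite /young_rank_lt; lia. Qed.

Lemma young_rank_lt_irr d : irreflexive (young_rank_lt d).
Proof. by move=> D; rewrite /young_rank_lt ltnn eqxx ltnn. Qed.

Lemma yedge_rank_lt d : subrel (yedge d) (young_rank_lt d).
Proof.
move=> D E /and3P[_ _ /orP[]] /hasP[P _ /andP[/andP[/andP[PD _] /eqP ->] numinP]].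
- have := numin_mono _ _ d (fsubD1set D P).
  by rewrite /young_rank_lt ltn_neqAle numinP => ->.
- rewrite /young_rank_lt (eqP numinP) eqxx ltnn /=.
  by rewrite [#|` E|](cardfsD1 P) PD.
Qed.

Lemma directed_cycle_strict_order (e lt : rel diagram) (c : seq diagram) :
  transitive lt -> irreflexive lt -> subrel e lt -> ~ directed_cycle e c.
Proof.
move=> lt_trans lt_irr sub_e_lt [+ _]; case: c => [|D c] // _ /=.
move=> /(sub_path sub_e_lt) /(order_path_min lt_trans).
by rewrite all_rcons lt_irr.
Qed.

Lemma yedge_no_directed_cycle d (c : seq diagram) : ~ directed_cycle (yedge d) c.
Proof.
apply: directed_cycle_strict_order.
- exact: young_rank_lt_trans.
- exact: young_rank_lt_irr.
- exact: yedge_rank_lt.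
Qed.

Theorem proposition3p10 (d : nat) (hd : 0 < d) :
  (* G_d has no directed cycle (vertices: all Ferrers diagrams) *)
  (forall c : seq diagram, all ferrers c -> ~ directed_cycle (yedge d) c) /\
  (* G_{d,n} (induced on Ferrers diagrams of order n) has no directed cycle *)
  (forall (n : nat) (c : seq diagram),
      all (of_order n) c -> ~ directed_cycle (yedge d) c).
Proof.
by split=> [c _ | n c _]; apply: yedge_no_directed_cycle.
Qed.
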